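(* Let $T$ be a reachable $\mathcal C_w$-maximal rigid module. For any $R,S\in\mathrm{add}(T)$ we have $Y_RY_S=q^{[R,S]}Y_{R\oplus S}$.
   Context: Setting: $\Lambda$ is the preprojective algebra of a finite connected quiver without oriented cycles with vertex set $I$, $w$ an element of the corresponding Weyl group with reduced expression $s_{i_r}\cdots s_{i_1}$, $\mathcal C_w$ the full subcategory of finite-dimensional $\Lambda$-modules that are quotients of finite direct sums of copies of $V_{\mathbf i}=\bigoplus_kV_k$, $V_k=\mathrm{soc}_{(i_k,\dots,i_1)}(\widehat I_{i_k})$ (where $\widehat I_i$ is the injective hull of the simple $S_i$ and $\mathrm{soc}_{(j_1,\dots,j_s)}(M)=M_s$, $M_0=0$, $M_p/M_{p-1}$ the sum of submodules of $M/M_{p-1}$ isomorphic to $S_{j_p}$). $[X,Y]=\dim\mathrm{Hom}_\Lambda(X,Y)$. A $\mathcal C_w$-maximal rigid module ($\mathrm{Ext}^1(T,T)=0$, and $X\in\mathcal C_w$, $\mathrm{Ext}^1(T\oplus X,X)=0$ imply $X\in\mathrm{add}T$) is $T=T_1\oplus\cdots\oplus T_r$ with pairwise non-isomorphic indecomposables, projective-injectives last; mutation replaces a non-projective $T_k$ by the unique indecomposable $T_k^*\not\cong T_k$ keeping maximal rigidity; reachable = obtained from $V_{\mathbf i}$ by mutations. $L_T=(\lambda_{ij})$, $\lambda_{ij}=[T_i,T_j]-[T_j,T_i]$. To a reachable $T$ is attached the cluster $(X_{T_1},\dots,X_{T_r})$ of its quantum seed, elements of a skew field satisfying $X_{T_i}X_{T_j}=q^{\lambda_{ij}}X_{T_j}X_{T_i}$.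 For $R=T_1^{a_1}\oplus\cdots\oplus T_r^{a_r}$ ($a_i\in\mathbb N$) put $X_R=q^{\frac12\sum_{i>j}a_ia_j\lambda_{ij}}X_{T_1}^{a_1}\cdots X_{T_r}^{a_r}$ and $Y_R=q^{-[R,R]/2}X_R$. *)

(* Abstract rendering of the data of a reachable
   C_w-maximal rigid module T = T_1 (+) ... (+) T_r together with its quantum
   cluster. *)
From HB Require Import structures.
From mathcomp Require Import all_boot all_order all_algebra.
Set Implicit Arguments. Unset Strict Implicit. Unset Printing Implicit Defensive.
Import Order.TTheory GRing.Theory Num.Theory.
Local Open Scope ring_scope.

Section QSeed.
Variables (r : nat) (h : 'I_r -> 'I_r -> nat).
(* h i j = [T_i, T_j] = dim Hom_Lambda(T_i, T_j). *)

Definition lam (i j : 'I_r) : int := (h i j)%:Z - (h j i)%:Z.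

(* R = T_1^{a_1} (+) ... (+) T_r^{a_r}, S = T_1^{b_1} (+) ... ;
   [R,S] = dim Hom(R,S) = sum_{i,j} a_i b_j [T_i,T_j]. *)
Definition homdim (a b : 'I_r -> nat) : nat :=
  (\sum_(i < r) \sum_(j < r) a i * b j * h i j)%N.

(* direct sum R (+) S corresponds to adding multiplicities *)
Definition msum (a b : 'I_r -> nat) : 'I_r -> nat := fun i => (a i + b i)%N.

Variables (K : unitRingType) (q12 : K) (X : 'I_r -> K).
(* q12 stands for q^{1/2}; q^m is q12 ^ (2 m). *)

Definition XR (a : 'I_r -> nat) : K :=
  q12 ^ (\sum_(i < r) \sum_(j < r | (j < i)%N) ((a i * a j)%:Z * lam i j))
  * \prod_(i < r) X i ^+ a i.

Definition YR (a : 'I_r -> nat) : K := q12 ^ (- (homdim a a)%:Z) * XR a.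
End QSeed.

(* Y_R and Y_S are, up to central powers of q^{1/2}, the ordered monomials
   X^a and X^b in the quasi-commuting cluster variables.  Reordering
   X^a X^b into X^{a+b} costs q^{Λ(a,b)} with Λ(a,b) = Σ_{i>j} a_i b_j λ_ij,
   and since λ is skew, Λ(a,b) - Λ(b,a) = [R,S] - [S,R]; with the
   bilinearity of [-,-] and of Λ this balances the powers of q. *)
From HB Require Import structures.
From mathcomp Require Import all_boot all_order all_algebra.
From mathcomp Require Import ring lra.
Import GRing.Theory.
Local Open Scope ring_scope.

Lemma sum_ltn_pairs_recr (V : nmodType) n (f : 'I_n.+1 -> 'I_n.+1 -> V) :
  \sum_(i < n.+1) \sum_(j < n.+1 | (j < i)%N) f i j =
  \sum_(i < n) \sum_(j < n | (j < i)%N)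
      f (widen_ord (leqnSn n) i) (widen_ord (leqnSn n) j)
  + \sum_(j < n) f ord_max (widen_ord (leqnSn n) j).
Proof.
rewrite big_ord_recr /=; congr (_ + _).
  apply: eq_bigr => i _; rewrite big_mkcond big_ord_recr /= ltnNge.
  by rewrite (ltnW (ltn_ord i)) addr0 -big_mkcond.
rewrite big_mkcond big_ord_recr /= ltnn addr0.
by apply: eq_bigr => j _; rewrite ltn_ord.
Qed.

Lemma sum_pairs_split (V : nmodType) n (f : 'I_n -> 'I_n -> V) :
  (forall i, f i i = 0) ->
  \sum_(i < n) \sum_(j < n) f i j =
  \sum_(i < n) \sum_(j < n | (j < i)%N) (f i j + f j i).
Proof.
move=> f_diag0.
have upper_swap : \sum_(i < n) \sum_(j < n | ~~ (j < i)%N) f i j =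
                  \sum_(i < n) \sum_(j < n | (j < i)%N) f j i.
  transitivity (\sum_(i < n) \sum_(j < n) (if (i < j)%N then f i j else 0)).
    apply: eq_bigr => i _; rewrite big_mkcond; apply: eq_bigr => j _.
    by case: (ltngtP i j) => // /val_inj ->; rewrite f_diag0.
  by rewrite exchange_big; apply: eq_bigr => i _; rewrite [RHS]big_mkcond.
under eq_bigr => i _ do rewrite (bigID (fun j : 'I_n => (j < i)%N)) /=.
by rewrite big_split /= upper_swap -big_split; under [RHS]eq_bigr do rewrite big_split.
Qed.

Section CentralUnit.
Set Implicit Arguments. Unset Strict Implicit.
Variables (K : unitRingType) (q : K).
Hypotheses (q_unit : q \is a GRing.unit) (q_central : forall x : K, q * x = x * q).

Lemma exprz_central (z : int) (x : K) : q ^ z * x = x * q ^ z.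
Proof.
have cxq : GRing.comm x q by rewrite /GRing.comm q_central.
by case: z => n; [exact/esym/commrX | exact/esym/commrV/commrX].
Qed.

Lemma mul_exprz_central (m n : int) (x y : K) :
  q ^ m * x * (q ^ n * y) = q ^ (m + n) * (x * y).
Proof.
by rewrite -mulrA (mulrA x) -exprz_central -!mulrA mulrA -exprzDr.
Qed.

Lemma qcomm_prod (I : Type) (s : seq I) (G : I -> K) (z : I -> int) (y : K) :
  (forall i, y * G i = q ^ z i * (G i * y)) ->
  y * \prod_(i <- s) G i = q ^ (\sum_(i <- s) z i) * (\prod_(i <- s) G i * y).
Proof.
move=> qcomm_yG; elim: s => [|i s IHs]; first by rewrite !big_nil expr0z mulr1 !mul1r.
by rewrite !big_cons mulrA qcomm_yG -!mulrA IHs mulrA mul_exprz_central !mulrA.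
Qed.

Lemma qcomm_exprr (x y : K) (z : int) m :
  x * y = q ^ z * (y * x) -> x * y ^+ m = q ^ (z * m%:Z) * (y ^+ m * x).
Proof.
move=> qcomm_xy; elim: m => [|m IHm]; first by rewrite expr0 mulr0 expr0z mulr1 !mul1r.
rewrite exprSr mulrA IHm -mulrA -(mulrA (y ^+ m)) qcomm_xy (mulrA (y ^+ m)).
rewrite -exprz_central -mulrA mulrA -exprzDr //.
by rewrite -addn1 PoszD mulrDr mulr1 !mulrA.
Qed.

Lemma qcomm_expr (x y : K) (z : int) k m :
  x * y = q ^ z * (y * x) ->
  x ^+ k * y ^+ m = q ^ (z * (k * m)%N%:Z) * (y ^+ m * x ^+ k).
Proof.
move=> qcomm_xy; elim: k => [|k IHk]; first by rewrite !expr0 mul0n mulr0 expr0z mulr1 !mul1r.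
rewrite exprS -mulrA IHk mulrA -exprz_central -mulrA (mulrA x) (qcomm_exprr m qcomm_xy).
by rewrite -!mulrA mulrA -exprzDr // mulSn PoszD mulrDr addrC.
Qed.

Lemma qmonomial_mul n (F : 'I_n -> K) (L : 'I_n -> 'I_n -> int) :
  (forall i j, F i * F j = q ^ (2 * L i j) * (F j * F i)) ->
  forall a b : 'I_n -> nat,
  \prod_(i < n) F i ^+ a i * \prod_(i < n) F i ^+ b i =
  q ^ (2 * \sum_(i < n) \sum_(j < n | (j < i)%N) ((a i * b j)%:Z * L i j))
    * \prod_(i < n) F i ^+ (a i + b i).
Proof.
elim: n F L => [|n IHn] F L qcommF a b.
  by rewrite !big_ord0 mulr0 expr0z !mul1r.
pose w := widen_ord (leqnSn n); pose x := F ord_max.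
have qcomm_x_prod :
    x ^+ a ord_max * \prod_(i < n) F (w i) ^+ b (w i) =
    q ^ (2 * \sum_(j < n) ((a ord_max * b (w j))%:Z * L ord_max (w j)))
      * (\prod_(i < n) F (w i) ^+ b (w i) * x ^+ a ord_max).
  rewrite mulr_sumr; apply: qcomm_prod => j.
  by rewrite (qcomm_expr _ _ (qcommF _ _)); congr (q ^ _ * _); ring.
rewrite sum_ltn_pairs_recr !big_ord_recr /= -/w -/x mulrDr exprzDr //.
rewrite -mulrA (mulrA (x ^+ _)) qcomm_x_prod -!mulrA mulrA -exprz_central -mulrA.
have /= IH := IHn (F \o w) _ (fun i j => qcommF (w i) (w j)) (a \o w) (b \o w).
rewrite (mulrA (\prod_(i < n) F (w i) ^+ a (w i))) IH.
by rewrite -exprD !mulrA -!exprzDr // [X in q ^ X * _ * _ = _]addrC.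
Qed.
End CentralUnit.

Definition lam_lower {r : nat} (h : 'I_r -> 'I_r -> nat) (a b : 'I_r -> nat) : int :=
  \sum_(i < r) \sum_(j < r | (j < i)%N) ((a i * b j)%:Z * lam h i j).

Section HomForms.
Variables (r : nat) (h : 'I_r -> 'I_r -> nat).

Lemma lam_lower_msuml a b c :
  lam_lower h (msum a b) c = lam_lower h a c + lam_lower h b c.
Proof.
rewrite -big_split; apply: eq_bigr => i _; rewrite -big_split.
by apply: eq_bigr => j _; rewrite /msum mulnDl PoszD mulrDl.
Qed.

Lemma lam_lower_msumr a b c :
  lam_lower h c (msum a b) = lam_lower h c a + lam_lower h c b.
Proof.
rewrite -big_split; apply: eq_bigr => i _; rewrite -big_split.
by apply: eq_bigr => j _; rewrite /msum mulnDr PoszD mulrDl.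
Qed.

Lemma homdim_msuml a b c :
  homdim h (msum a b) c = (homdim h a c + homdim h b c)%N.
Proof.
rewrite -big_split; apply: eq_bigr => i _; rewrite -big_split.
by apply: eq_bigr => j _; rewrite /msum !mulnDl.
Qed.

Lemma homdim_msumr a b c :
  homdim h c (msum a b) = (homdim h c a + homdim h c b)%N.
Proof.
rewrite -big_split; apply: eq_bigr => i _; rewrite -big_split.
by apply: eq_bigr => j _; rewrite /msum mulnDr !mulnDl.
Qed.

Lemma homdimE a b :
  (homdim h a b)%:Z = \sum_(i < r) \sum_(j < r) ((a i * b j)%:Z * (h i j)%:Z).
Proof.
rewrite -natz natr_sum; apply: eq_bigr => i _; rewrite natr_sum.
by apply: eq_bigr => j _; rewrite natrM !natz.
Qed.

Lemma homdim_skew a b :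
  (homdim h a b)%:Z - (homdim h b a)%:Z = lam_lower h a b - lam_lower h b a.
Proof.
have -> : (homdim h a b)%:Z - (homdim h b a)%:Z =
          \sum_(i < r) \sum_(j < r) ((a i * b j)%:Z * lam h i j).
  rewrite !homdimE [X in _ - X]exchange_big -sumrB; apply: eq_bigr => i _.
  by rewrite -sumrB; apply: eq_bigr => j _; rewrite mulrBr mulnC.
rewrite sum_pairs_split => [|i]; last by rewrite /lam subrr mulr0.
rewrite /lam_lower -sumrB; apply: eq_bigr => i _; rewrite -sumrB.
by apply: eq_bigr => j _; rewrite /lam [(b i * a j)%N]mulnC; ring.
Qed.
End HomForms.

Lemma YRE r (h : 'I_r -> 'I_r -> nat) (K : unitRingType) (q : K) (X : 'I_r -> K) a :
  q \is a GRing.unit ->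
  YR h q X a = q ^ (lam_lower h a a - (homdim h a a)%:Z) * \prod_(i < r) X i ^+ a i.
Proof. by move=> q_unit; rewrite /YR /XR mulrA -exprzDr // addrC. Qed.

Theorem lemma10p4 (r : nat) (h : 'I_r -> 'I_r -> nat)
  (K : unitRingType)
  (K_skew : forall x : K, x != 0 -> x \is a GRing.unit)
  (q12 : K) (q12_unit : q12 \is a GRing.unit)
  (q12_central : forall x : K, q12 * x = x * q12)
  (X : 'I_r -> K) (X_nz : forall i, X i != 0)
  (X_qcomm : forall i j : 'I_r,
     X i * X j = q12 ^ (2 * lam h i j) * (X j * X i))
  (a b : 'I_r -> nat) :
  YR h q12 X a * YR h q12 X b
  = q12 ^ (2 * (homdim h a b)%:Z) * YR h q12 X (msum a b).
Proof.
rewrite !YRE // mul_exprz_central // (qmonomial_mul q12_unit q12_central X_qcomm).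
rewrite !mulrA -!exprzDr // -/(lam_lower h a b); congr (q12 ^ _ * _).
rewrite lam_lower_msuml !lam_lower_msumr homdim_msuml !homdim_msumr !PoszD.
have := homdim_skew h a b; lra.
Qed.
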